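(* Let $S$ be a semigroup such that for every element $s\in S$ the number of decompositions of $s$ as a product $s=s_1\cdots s_k$ ($k\ge1$) of non-identity elements of $S$ is finite. Then the category $\mathbf{OI}_{++ep}/N(S)$ is Gröbner.
   Context: Gröbner categories. Let $\mathcal{C}$ be a small category and $c$ an object. An admissible order on the morphisms out of $c$ is a choice, for every object $c'$, of a well-order $\preceq_{c'}$ on $\mathrm{Hom}(c,c')$ such that $f\prec_{c'} f'$ implies $g\circ f\prec_{c''} g\circ f'$ for all $g:c'\to c''$. On morphisms out of $c$ put the preorder $f\le g$ iff $g=h\circ f$ for some $h$; $|c/\mathcal{C}|$ is the associated poset. A poset is Noetherian if every sequence $x_1,x_2,\dots$ has $i<j$ with $x_i\le x_j$. $\mathcal{C}$ is Gröbner if for every object $c$: (G1) morphisms out of $c$ admit an admissible order, and (G2) $|c/\mathcal{C}|$ is Noetherian. $\mathbf{OI}_{++ep}$ is the category of finite ordinals $[n]=\{0<1<\dots<n\}$ with $n\ge1$ and order-preserving injections preserving both endpoints ($\varphi(0)=0$, $\varphi(n)=m$). $N(S)$ assigns $S^n$ to $[n]$, and for such $\varphi:[n]\to[m]$, $N(S)(\varphi)(t_1,\dots,t_m)=(s_1,\dots,s_n)$ with $s_i=t_{\varphi(i-1)+1}\cdots t_{\varphi(i)}$. $\mathbf{OI}_{++ep}/N(S)$ is its category of elements: objects are non-empty finite sequences $(s_1,\dots,s_n)$ in $S$; a morphism $(s_1,\dots,s_n)\to(t_1,\dots,t_m)$ is an endpoint-preserving injection $\varphi:[n]\to[m]$ with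 $N(S)(\varphi)(t_1,\dots,t_m)=(s_1,\dots,s_n)$, i.e.\ a replacement of each $s_i$ by a consecutive block of $t$'s whose product is $s_i$. *)

From mathcomp Require Import all_boot.
Set Implicit Arguments.
Unset Strict Implicit.
Unset Printing Implicit Defensive.

Definition sprod_eq (S : Type) (mul : S -> S -> S) (l : seq S) (x : S) : Prop :=
  match l with
  | [::] => False
  | y :: ys => foldl mul y ys = x
  end.

Definition is_identity (S : Type) (mul : S -> S -> S) (e : S) : Prop :=
  forall y, mul e y = y /\ mul y e = y.

Definition finite_decompositions (S : Type) (mul : S -> S -> S) : Prop :=
  forall s : S, exists L : seq (seq S), forall d : seq S,
    sprod_eq mul d s ->
    (forall i x, onth d i = Some x -> ~ is_identity mul x) ->
    exists j, onth L j = Some d.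

Definition phin (n m : nat) (phi : {ffun 'I_n.+1 -> 'I_m.+1}) (k : nat) : nat :=
  phi (inord k).

(* Morphisms (s_1..s_n) -> (t_1..t_m) of OI_{++ep}/N(S): order-preserving
   injections phi : [n] -> [m] with phi 0 = 0, phi n = m and
   s_i = t_{phi(i-1)+1} ... t_{phi(i)}  (0-indexed below: entry i of s is the
   product of the entries of t at positions phi(i), ..., phi(i+1)-1). *)
Definition is_mor (S : Type) (mul : S -> S -> S) (s t : seq S)
    (phi : {ffun 'I_(size s).+1 -> 'I_(size t).+1}) : Prop :=
  [/\ (forall i j : 'I_(size s).+1, i < j -> phi i < phi j),
      phin phi 0 = 0,
      phin phi (size s) = size t &
      forall (i : nat) (x : S), onth s i = Some x ->
        sprod_eq mul (drop (phin phi i) (take (phin phi i.+1) t)) x].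

Arguments is_mor {S} mul s t phi.

Definition Hom (S : Type) (mul : S -> S -> S) (s t : seq S) :=
  {phi : {ffun 'I_(size s).+1 -> 'I_(size t).+1} | is_mor mul s t phi}.

Arguments Hom {S} mul s t.

Definition comp_is (S : Type) (mul : S -> S -> S) (s t u : seq S)
    (g : Hom mul t u) (f : Hom mul s t) (h : Hom mul s u) : Prop :=
  proj1_sig h = [ffun i => proj1_sig g (proj1_sig f i)].

Definition well_order (T : Type) (R : T -> T -> Prop) : Prop :=
  [/\ (forall x, R x x),
      (forall x y, R x y -> R y x -> x = y),
      (forall x y z, R x y -> R y z -> R x z),
      (forall x y, R x y \/ R y x) &
      (forall P : T -> Prop, (exists x, P x) ->
         exists x, P x /\ forall y, P y -> R x y)].

Definition admissible_order (S : Type) (mul : S -> S -> S) (c : seq S)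
    (R : forall c' : seq S, Hom mul c c' -> Hom mul c c' -> Prop) : Prop :=
  (forall c', 0 < size c' -> well_order (R c')) /\
  (forall (c' c'' : seq S) (g : Hom mul c' c'') (f f' : Hom mul c c')
          (h h' : Hom mul c c''),
     0 < size c' -> 0 < size c'' ->
     comp_is g f h -> comp_is g f' h' ->
     (R c' f f' /\ f <> f') -> (R c'' h h' /\ h <> h')).

Arguments admissible_order {S} mul c R.

(* |c/C| is Noetherian: every sequence of morphisms f_k : c -> t_k has i < j
   with f_i <= f_j, i.e. f_j = h \o f_i for some morphism h. *)
Definition noetherian_under (S : Type) (mul : S -> S -> S) (c : seq S) : Prop :=
  forall (t : nat -> seq S) (f : forall k, Hom mul c (t k)),
    (forall k, 0 < size (t k)) ->
    exists i j, i < j /\ exists h : Hom mul (t i) (t j), comp_is h (f i) (f j).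

(* OI_{++ep}/N(S) is Groebner: objects are non-empty finite sequences in S *)
Definition groebner_OIep_NS (S : Type) (mul : S -> S -> S) : Prop :=
  forall c : seq S, 0 < size c ->
    (exists R, admissible_order mul c R) /\ noetherian_under mul c.

From mathcomp Require Import all_boot all_order boolp zify.
From Stdlib Require List.

Set Implicit Arguments.
Unset Strict Implicit.
Unset Printing Implicit Defensive.

Import Order.TTheory.

(* Morphisms out of [c] are ordered lexicographically by their value sequences
   [phi 0, ..., phi n]; there are finitely many of them into a given target, and
   post-composition with a strictly increasing map preserves the lexicographic
   order, so this order is admissible.

   A morphism [c -> t] cuts [t] into blocks whose products are the entries of [c].
   Deleting the identities from a block leaves one of the finitely many
   decompositions of the corresponding entry into non-identities (or nothing),
   and the block is recovered from this skeleton and the lengths of the runs of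
   identities around its letters.  By Dickson's lemma any sequence of morphisms
   [f_k : c -> t_k] contains [f_i], [f_j], [i < j], with equal skeletons and
   pointwise longer runs in [f_j].  Then every block of [f_j] is the matching block
   of [f_i] with identities inserted, and cutting each block of [f_j] accordingly
   is a morphism [h : t_i -> t_j] with [h \o f_i = f_j]. *)


Definition wqo_on {T : Type} (P : T -> Prop) (R : T -> T -> Prop) : Prop :=
  forall f : nat -> T, (forall k, P (f k)) ->
  exists2 g : nat -> nat, {homo g : p q / p < q} & {homo f \o g : p q / p < q >-> R p q}.

Lemma wqo_on_comap {T U : Type} (P : T -> Prop) (R : T -> T -> Prop)
    (P' : U -> Prop) (R' : U -> U -> Prop) (F : T -> U) :
  wqo_on P' R' -> (forall x, P x -> P' (F x)) ->
  (forall x y, P x -> P y -> R' (F x) (F y) -> R x y) -> wqo_on P R.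
Proof.
move=> wqo' PP' RR' f Pf; have [g g_mono chain] := wqo' (F \o f) (fun k => PP' _ (Pf k)).
by exists g => // p q pq; apply: RR'; [exact: Pf | exact: Pf | exact: chain].
Qed.

Lemma wqo_on_prod {T U : Type} (P1 : T -> Prop) (R1 : T -> T -> Prop)
    (P2 : U -> Prop) (R2 : U -> U -> Prop) :
  wqo_on P1 R1 -> wqo_on P2 R2 ->
  wqo_on (fun x => P1 x.1 /\ P2 x.2) (fun x y => R1 x.1 y.1 /\ R2 x.2 y.2).
Proof.
move=> wqo1 wqo2 f Pf.
have [g1 g1_mono chain1] := wqo1 (fun k => (f k).1) (fun k => (Pf k).1).
have [g2 g2_mono chain2] := wqo2 (fun k => (f (g1 k)).2) (fun k => (Pf _).2).
exists (g1 \o g2) => p q pq; first by apply: g1_mono; apply: g2_mono.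
by split; [apply: chain1; apply: g2_mono | apply: chain2].
Qed.

Lemma wqo_on_vec {T : Type} (P : nat -> T -> Prop) (R : nat -> T -> T -> Prop) n :
  (forall a, a < n -> wqo_on (P a) (R a)) ->
  wqo_on (fun u => forall a, a < n -> P a (u a))
         (fun u v => forall a, a < n -> R a (u a) (v a)).
Proof.
elim: n => [|n IH] wqoR; first by move=> f _; exists id.
apply: (wqo_on_comap (F := fun u => (u, u n)))
  (wqo_on_prod (IH (fun a an => wqoR a (leqW an))) (wqoR n (ltnSn n))) _ _.
  by move=> u Pu; split=> [a an|]; apply: Pu => //; apply: leqW.
move=> u v _ _ [Ruv Rn] a; rewrite ltnS leq_eqVlt => /predU1P[->|] //.
exact: Ruv.
Qed.

Lemma tail_argmin (f : nat -> nat) p :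
  exists2 q, p < q & forall r, p < r -> f q <= f r.
Proof.
have ex_val : exists v, `[< exists2 q, p < q & f q = v >].
  by exists (f p.+1); apply/asboolP; exists p.+1.
case: (ex_minnP ex_val) => v /asboolP[q pq <-] fq_min.
by exists q => // r pr; apply: fq_min; apply/asboolP; exists r.
Qed.

Lemma leq_wqo : wqo_on (fun _ : nat => True) leq.
Proof.
move=> f _; pose next p := s2val (cid2 (tail_argmin f p)).
have next_gt p : p < next p := s2valP (cid2 (tail_argmin f p)).
have next_min p r : p < r -> f (next p) <= f r := s2valP' (cid2 (tail_argmin f p)) r.
exists (fun k => iter k.+1 next 0).
  by apply: (homo_ltn ltn_trans) => k; apply: next_gt.
apply: (homo_ltn leq_trans) => k /=.
by apply: next_min; apply: ltn_trans (next_gt _) (next_gt _).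
Qed.

Lemma bounded_eq_wqo N : wqo_on (fun i => i <= N) eq.
Proof.
apply: (wqo_on_comap (F := fun i => (i, N - i))) (wqo_on_prod leq_wqo leq_wqo) _ _ => //=.
by move=> i j iN jN [ij Nij]; lia.
Qed.

Lemma onth_eq_wqo {T : Type} (L : seq T) : wqo_on (fun x => exists j, onth L j = Some x) eq.
Proof.
move=> f f_in; have [j fj] := choice f_in.
have j_bound k : j k <= size L by apply: ltnW; rewrite -onthTE fj.
have [g g_mono chain] := bounded_eq_wqo j_bound.
exists g => // p q pq; have /= jpq := chain p q pq.
by have := fj (g q); rewrite -jpq fj => -[].
Qed.

Lemma all2_leq_nth (s t : seq nat) : size s = size t ->
  (forall i, i < size s -> nth 0 s i <= nth 0 t i) -> all2 leq s t.
Proof.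
elim: s t => [|x s IH] [|y t] //= [st] le_st.
by rewrite (le_st 0) //= IH // => i; apply: (le_st i.+1).
Qed.

Lemma leq_seq_wqo W : wqo_on (fun u : seq nat => size u <= W) (fun u v => all2 leq u v).
Proof.
have leq_vec := wqo_on_vec (P := fun _ _ => True) (R := fun _ => leq) (fun a _ => leq_wqo).
apply: (wqo_on_comap (F := fun u => (size u, nth 0 u)))
  (wqo_on_prod (bounded_eq_wqo (N := W)) (leq_vec W)) _ _ => //=.
move=> u v uW _ [uv le_uv]; apply: all2_leq_nth => // i iu.
by apply: le_uv; apply: leq_trans uW.
Qed.

Lemma onth_exists {T : Type} (s : seq T) i : i < size s -> exists x, onth s i = Some x.
Proof. by rewrite -onthTE; case: onth => // x _; exists x. Qed.

Lemma onth_filter {T : Type} (p : pred T) s i x : onth (filter p s) i = Some x -> p x.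
Proof.
elim: s i => [|y s IH] i; first by rewrite onth0n.
rewrite /=; case: ifP => py; last exact: IH.
by case: i => [[<-]|i /IH].
Qed.

Lemma size_onth_le_max {T : Type} (L : seq (seq T)) j d :
  onth L j = Some d -> size d <= \max_(e <- L) size e.
Proof.
elim: L j => [|e L IH] [|j] //=; rewrite big_cons; first by case=> <-; apply: leq_maxl.
by move/IH/leq_trans; apply; apply: leq_maxr.
Qed.

Lemma Forall2_onth {A B : Type} (R : A -> B -> Prop) xs ys x0 i y :
  List.Forall2 R xs ys -> onth ys i = Some y -> R (nth x0 xs i) y.
Proof.
move=> Rxy; elim: Rxy i => [|x y' xs' ys' Rxy _ IH] [|i] //=; first by case=> <-.
exact: IH.
Qed.

Lemma Forall2_flatten {A B : Type} {I : eqType} (R : A -> B -> Prop)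
    (X : I -> seq A) (Y : I -> seq B) l :
  (forall a, a \in l -> List.Forall2 R (X a) (Y a)) ->
  List.Forall2 R (flatten (map X l)) (flatten (map Y l)).
Proof.
elim: l => [|a l IH] RXY /=; first by constructor.
apply: List.Forall2_app; first by apply: RXY; rewrite mem_head.
by apply: IH => b bl; apply: RXY; rewrite in_cons bl orbT.
Qed.

Lemma flatten_flatten {T : Type} (Xs : seq (seq (seq T))) :
  flatten (flatten Xs) = flatten (map flatten Xs).
Proof. by elim: Xs => //= X Xs IH; rewrite flatten_cat IH. Qed.

Lemma take_flatten_take {T : Type} (Cs : seq (seq T)) k :
  take (size (flatten (take k Cs))) (flatten Cs) = flatten (take k Cs).
Proof. by rewrite -{2}(cat_take_drop k Cs) flatten_cat take_size_cat. Qed.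

Lemma size_flatten_take_le {T : Type} (Cs : seq (seq T)) k :
  size (flatten (take k Cs)) <= size (flatten Cs).
Proof. by rewrite -{2}(cat_take_drop k Cs) flatten_cat size_cat leq_addr. Qed.

Lemma size_flatten_take_mono {T : Type} (Cs : seq (seq T)) i j :
  all (fun C => 0 < size C) Cs -> i < j -> j <= size Cs ->
  size (flatten (take i Cs)) < size (flatten (take j Cs)).
Proof.
move=> /(all_nthP [::]) Cs_ne ij jCs.
rewrite -(cat_take_drop i (take j Cs)) (take_takel _ (ltnW ij)) flatten_cat size_cat.
rewrite -[ltnLHS]addn0 ltn_add2l (drop_nth [::]) ?size_takel // nth_take //=.
by rewrite size_cat addn_gt0 Cs_ne // (leq_trans ij).
Qed.

Lemma lexi_map_mono_in (D : {pred nat}) (G : nat -> nat) (s1 s2 : seq nat) :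
  {in D &, {homo G : x y / x < y}} -> {subset s1 <= D} -> {subset s2 <= D} ->
  (map G s1 <= map G s2 :> seqlexi nat)%O = (s1 <= s2 :> seqlexi nat)%O.
Proof.
move=> G_mono; elim: s1 s2 => [|x s1 IH] [|y s2] //= s1D s2D.
have [xD s1D'] : x \in D /\ {subset s1 <= D}.
  by split=> [|z zs]; apply: s1D; rewrite ?mem_head ?in_cons ?zs ?orbT.
have [yD s2D'] : y \in D /\ {subset s2 <= D}.
  by split=> [|z zs]; apply: s2D; rewrite ?mem_head ?in_cons ?zs ?orbT.
by rewrite !lexi_cons !leEnat !(leq_mono_in G_mono) // IH.
Qed.

Lemma ex_minimal_key {d} {T : orderType d} (I : finType) (F : I -> T) (Q : I -> Prop) :
  (exists i, Q i) -> exists i, Q i /\ forall j, Q j -> (F i <= F j)%O.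
Proof.
move=> [i0 /asboolP Qi0].
case: (@arg_minP _ _ _ i0 (fun i => `[< Q i >]) F Qi0) => i /asboolP Qi i_min.
by exists i; split=> // j Qj; apply: i_min; apply/asboolP.
Qed.

Lemma phin_ord n m (phi : {ffun 'I_n.+1 -> 'I_m.+1}) (i : 'I_n.+1) : phin phi i = phi i.
Proof. by rewrite /phin inord_val. Qed.

Definition key n m (phi : {ffun 'I_n.+1 -> 'I_m.+1}) : seqlexi nat :=
  [seq val (phi i) | i <- enum 'I_n.+1].

Lemma key_inj n m : injective (@key n m).
Proof.
move=> phi phi' /eq_in_map eq_phi; apply/ffunP => i.
by apply/val_inj/eq_phi; rewrite mem_enum.
Qed.

Lemma key_bounded n m (phi : {ffun 'I_n.+1 -> 'I_m.+1}) : {subset key phi <= [pred v | v <= m]}.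
Proof. by move=> v /mapP[i _ ->]; rewrite inE -ltnS ltn_ord. Qed.

Lemma key_comp n m p (phi : {ffun 'I_n.+1 -> 'I_m.+1}) (psi : {ffun 'I_m.+1 -> 'I_p.+1}) :
  key [ffun i => psi (phi i)] = [seq val (psi (inord v)) | v <- key phi].
Proof. by rewrite /key -map_comp; apply: eq_map => i /=; rewrite ffunE inord_val. Qed.

Section OIepNS.

Variables (S : Type) (mul : S -> S -> S).
Hypothesis hfin : finite_decompositions mul.

Definition isid (x : S) : bool := `[< is_identity mul x >].

Lemma identity_uniq e e' : is_identity mul e -> is_identity mul e' -> e = e'.
Proof. by move=> ide ide'; case: (ide e') => <- _; case: (ide' e). Qed.

Definition skel (B : seq S) : seq S := [seq x <- B | ~~ isid x].

(* The lengths of the maximal runs of identities in [B], read between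
   consecutive entries of [skel B]: one more entry than [skel B]. *)
Fixpoint gaps (B : seq S) : seq nat :=
  if B is x :: B' then
    if isid x then (head 0 (gaps B')).+1 :: behead (gaps B') else 0 :: gaps B'
  else [:: 0].

Lemma gaps_cons B : gaps B = head 0 (gaps B) :: behead (gaps B).
Proof. by case: B => [|x B] //=; case: ifP. Qed.

Lemma size_gaps B : size (gaps B) = (size (skel B)).+1.
Proof.
elim: B => [|x B IH] //=; rewrite /skel /=.
by case: ifP => _ /=; rewrite -IH // [in RHS]gaps_cons.
Qed.

Inductive insert_ids : seq S -> seq S -> Prop :=
| insert_ids_nil : insert_ids [::] [::]
| insert_ids_keep x B B' : insert_ids B B' -> insert_ids (x :: B) (x :: B')
| insert_ids_id e B B' : is_identity mul e -> insert_ids B B' -> insert_ids B (e :: B').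

Lemma gaps_insert_ids B' B :
  skel B = skel B' -> all2 leq (gaps B) (gaps B') -> insert_ids B B'.
Proof.
rewrite /skel; elim: B' B => [|y B' IH] [|x B] /=.
- by constructor.
- by case: (boolP (isid x)).
- case: (boolP (isid y)) => [/asboolP idy|] //= skelB' le_gaps.
  apply: insert_ids_id => //; apply: IH => //.
  by move: (size_gaps B') le_gaps; rewrite /skel -skelB'; case: (gaps B') => [|? []].
case: (boolP (isid x)) => [idx|nidx]; case: (boolP (isid y)) => [idy|nidy] //=.
- rewrite (identity_uniq (asboolW idx) (asboolW idy)) => skelB /andP[le_head le_tail].
  apply: insert_ids_keep; apply: IH => //.
  by rewrite [gaps B]gaps_cons [gaps B']gaps_cons /= -ltnS le_head.
- move=> skelB le_gaps; apply: insert_ids_id; first exact/asboolP.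
  by apply: IH; rewrite /= ?(negbTE nidx) // [gaps B']gaps_cons.
- by move=> [<- skelB] le_gaps; apply: insert_ids_keep; apply: IH.
Qed.

Lemma foldl_skel x B : foldl mul x B = foldl mul x (skel B).
Proof.
elim: B x => [//|y B IH] x; rewrite /skel /=.
by case: (boolP (isid y)) => [/asboolP idy|_] /=; rewrite -/(skel B) -IH ?(proj2 (idy x)).
Qed.

Lemma sprod_skel B s : sprod_eq mul B s -> skel B <> [::] -> sprod_eq mul (skel B) s.
Proof.
case: B => [//|y B] /= <-; rewrite foldl_skel {1}/skel /=.
case: (boolP (isid y)) => [/asboolP idy|//] /=.
by case: (skel B) => [//|z zs] _ /=; case: (idy z) => ->.
Qed.

Lemma skel_nonid B i x : onth (skel B) i = Some x -> ~ is_identity mul x.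
Proof. by move=> Bix; have /asboolPn := onth_filter Bix. Qed.

Lemma foldl_ids B B' x : insert_ids B B' -> B = [::] -> foldl mul x B' = x.
Proof.
move=> insB; elim: insB x => [//|//|e B0 B0' ide _ IH] x B0_nil /=.
by case: (ide x) => _ ->; apply: IH.
Qed.

Lemma insert_ids_refine B B' : insert_ids B B' -> B <> [::] ->
  exists2 Cs, List.Forall2 (sprod_eq mul) Cs B & flatten Cs = B'.
Proof.
elim=> [//|x B0 B0' insB IH _|e B0 B0' ide insB IH B0_nil].
  case: B0 insB IH => [|z B0] insB IH.
    exists [:: x :: B0']; last by rewrite /= cats0.
    by constructor=> //=; apply: foldl_ids insB _.
  case: IH => // Cs CsB <-.
  by exists ([:: x] :: Cs); first by constructor.
have [Cs CsB <-] := IH B0_nil.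
case: CsB B0_nil => [//|C y Cs' B1 Cy CsB1] _.
exists ((e :: C) :: Cs') => //; constructor=> //.
by case: C Cy => [//|w C] /=; case: (ide w) => ->.
Qed.

Lemma insert_ids_wqo x :
  wqo_on (fun B => sprod_eq mul B x) insert_ids.
Proof.
have [L L_complete] := hfin x.
apply: (wqo_on_comap (F := fun B => (skel B, gaps B)))
  (wqo_on_prod (onth_eq_wqo (L := [::] :: L))
                (leq_seq_wqo (W := (\max_(d <- L) size d).+1))) _ _.
  move=> B Bx /=; rewrite size_gaps ltnS.
  case E: (skel B) => [|y ys]; first by split; [exists 0 |].
  have skelB_nil : skel B <> [::] by rewrite E.
  rewrite -E; have [j Lj] := L_complete _ (sprod_skel Bx skelB_nil) (@skel_nonid B).
  by split; [exists j.+1 | apply: size_onth_le_max Lj].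
by move=> B B' _ _ [skelB le_gaps]; apply: gaps_insert_ids.
Qed.

Lemma Forall2_sprod_nonempty Cs s :
  List.Forall2 (sprod_eq mul) Cs s -> all (fun C => 0 < size C) Cs.
Proof. by elim=> [|[|? ?] ? ? ? //= _ ->]. Qed.

Lemma Hom_inj s t : injective (@sval _ (is_mor mul s t)).
Proof. by move=> [phi H] [phi' H'] /= phi_phi'; apply: eq_exist. Qed.

Definition block (s t : seq S) (phi : {ffun 'I_(size s).+1 -> 'I_(size t).+1}) b :=
  drop (phin phi b) (take (phin phi b.+1) t).

Lemma flatten_blocks s t phi : is_mor mul s t phi -> forall a, a <= size s ->
  flatten [seq block phi b | b <- iota 0 a] = take (phin phi a) t.
Proof.
case=> phi_mono phi0 _ _; elim=> [|a IH] a_le; first by rewrite phi0 take0.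
have phi_le : phin phi a <= phin phi a.+1.
  by apply/ltnW/phi_mono; rewrite !inordK ?ltnS ?(ltnW a_le).
rewrite -addn1 iotaD map_cat flatten_cat (IH (ltnW a_le)) /= cats0 add0n addn1.
by rewrite /block -{1}(take_takel _ phi_le) cat_take_drop.
Qed.

Definition mor_of_blocks (s t : seq S) (Cs : seq (seq S)) :
    {ffun 'I_(size s).+1 -> 'I_(size t).+1} :=
  [ffun i : 'I_(size s).+1 => inord (size (flatten (take i Cs)))].

Lemma mor_of_blocksE s t Cs (i : 'I_(size s).+1) : flatten Cs = t ->
  mor_of_blocks s t Cs i = size (flatten (take i Cs)) :> nat.
Proof. by move=> Cs_t; rewrite ffunE inordK // ltnS -Cs_t size_flatten_take_le. Qed.

Lemma is_mor_of_blocks s t Cs :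
  List.Forall2 (sprod_eq mul) Cs s -> flatten Cs = t -> is_mor mul s t (mor_of_blocks s t Cs).
Proof.
move=> Cs_s Cs_t; have size_Cs : size Cs = size s := List.Forall2_length Cs_s.
have phinE k : k <= size s -> phin (mor_of_blocks s t Cs) k = size (flatten (take k Cs)).
  by move=> k_le; rewrite /phin mor_of_blocksE // inordK.
split.
- move=> i j ij; rewrite !mor_of_blocksE //.
  by apply: size_flatten_take_mono (Forall2_sprod_nonempty Cs_s) ij _; rewrite size_Cs -ltnS.
- by rewrite phinE // take0.
- by rewrite phinE // take_oversize ?size_Cs // Cs_t.
move=> i x s_ix; have i_lt : i < size s by rewrite -onthTE s_ix.
rewrite !phinE ?(ltnW i_lt) // -Cs_t take_flatten_take (take_nth [::]) ?size_Cs //.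
by rewrite -cats1 flatten_cat drop_size_cat //= cats0; apply: Forall2_onth Cs_s s_ix.
Qed.

Lemma factor_through_refinement s t t' (f : Hom mul s t) (f' : Hom mul s t') :
  (forall a, a < size s -> exists2 Cs, List.Forall2 (sprod_eq mul) Cs (block (sval f) a)
                                     & flatten Cs = block (sval f') a) ->
  exists h : Hom mul t t', comp_is h f f'.
Proof.
case: f f' => [phi phiM] [phi' phi'M] /= refine.
have refine_total a : exists Cs, a < size s ->
    List.Forall2 (sprod_eq mul) Cs (block phi a) /\ flatten Cs = block phi' a.
  by case: (ltnP a (size s)) => [/refine[Cs Cs_B Cs_B'] | _]; [exists Cs | exists [::]].
have [Cf CfP] := choice refine_total.
pose prefix a := flatten [seq Cf b | b <- iota 0 a].
have prefix_t a : a <= size s ->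
    List.Forall2 (sprod_eq mul) (prefix a) (take (phin phi a) t).
  move=> a_le; rewrite -(flatten_blocks phiM a_le); apply: Forall2_flatten => b.
  by rewrite mem_iota => /andP[_ b_lt]; case: (CfP b (leq_trans b_lt a_le)).
have prefix_t' a : a <= size s -> flatten (prefix a) = take (phin phi' a) t'.
  move=> a_le; rewrite -(flatten_blocks phi'M a_le) flatten_flatten -map_comp.
  congr flatten; apply/eq_in_map => b; rewrite mem_iota => /andP[_ b_lt].
  by case: (CfP b (leq_trans b_lt a_le)).
have [_ _ phi_end _] := phiM; have [_ _ phi'_end _] := phi'M.
pose Cs := prefix (size s).
have Cs_t : List.Forall2 (sprod_eq mul) Cs t.
  by have := prefix_t _ (leqnn _); rewrite phi_end take_size.
have Cs_t' : flatten Cs = t' by rewrite prefix_t' // phi'_end take_size.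
exists (exist _ _ (is_mor_of_blocks Cs_t Cs_t')); apply/ffunP => i /=.
have i_le : (i : nat) <= size s by rewrite -ltnS.
have Cs_split : Cs = prefix i ++ flatten [seq Cf b | b <- iota i (size s - i)].
  by rewrite /Cs /prefix -flatten_cat -map_cat -{2}(add0n i) -iotaD subnKC.
have size_prefix : size (prefix i) = phi i.
  have -> : size (prefix i) = size (take (phin phi i) t).
    exact: List.Forall2_length (prefix_t i i_le).
  by rewrite size_takel phin_ord // -ltnS.
rewrite ffunE; apply: val_inj => /=.
by rewrite mor_of_blocksE // Cs_split take_size_cat // prefix_t' // size_takel phin_ord // -ltnS.
Qed.

Lemma blocks_wqo (c : seq S) :
  wqo_on (fun u => forall a, a < size c -> forall x, onth c a = Some x -> sprod_eq mul (u a) x)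
         (fun u v => forall a, a < size c -> insert_ids (u a) (v a)).
Proof.
apply: (wqo_on_vec (R := fun _ => insert_ids)
          (P := fun a B => forall x, onth c a = Some x -> sprod_eq mul B x)).
move=> a /onth_exists[x c_ax].
by apply: (wqo_on_comap (F := id)) (insert_ids_wqo (x := x)) _ _ => // B /(_ x c_ax).
Qed.

Lemma noetherian_OIep (c : seq S) : noetherian_under mul c.
Proof.
move=> t f _; pose B k := block (sval (f k)).
have B_prod k a : a < size c -> forall x, onth c a = Some x -> sprod_eq mul (B k a) x.
  by case: (svalP (f k)) => _ _ _ prod _; apply: prod.
have [g g_mono chain] := @blocks_wqo c B B_prod.
exists (g 0), (g 1); split; first exact: g_mono.
apply: factor_through_refinement => a a_lt; apply: insert_ids_refine.
  exact: (chain 0 1 _ a a_lt).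
have [x c_ax] := onth_exists a_lt.
by move: (B_prod (g 0) a a_lt x c_ax); rewrite /B; case: block.
Qed.

Definition lex_le (c c' : seq S) (f f' : Hom mul c c') : Prop :=
  (key (sval f) <= key (sval f'))%O.

Lemma lex_ltP c c' (f f' : Hom mul c c') :
  (lex_le f f' /\ f <> f') <-> (key (sval f) < key (sval f'))%O.
Proof.
rewrite lt_neqAle; split=> [[le_ff' neq_ff']|/andP[neq_ff' le_ff']].
  by rewrite le_ff' andbT; apply: contra_notN neq_ff' => /eqP/key_inj/Hom_inj.
by split=> // eq_ff'; move: neq_ff'; rewrite eq_ff' eqxx.
Qed.

Lemma lex_well_order c c' : well_order (@lex_le c c').
Proof.
split.
- by move=> f; apply: le_refl.
- by move=> f f' ff' f'f; apply/Hom_inj/key_inj/le_anti/andP.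
- by move=> f f' f''; apply: le_trans.
- by move=> f f'; case/orP: (le_total (key (sval f)) (key (sval f'))); [left | right].
move=> P [f Pf].
have [|phi [[phiM Pphi] phi_min]] :=
  ex_minimal_key (@key _ _) (Q := fun phi => exists H : is_mor mul c c' phi, P (exist _ phi H)).
  by exists (sval f); case: f Pf => phi H Pf; exists H.
exists (exist _ phi phiM); split=> // f' Pf'; apply: phi_min.
by case: f' Pf' => phi' H' Pf'; exists H'.
Qed.

Lemma lex_le_postcomp c c' c'' (g : Hom mul c' c'') (f f' : Hom mul c c') (h h' : Hom mul c c'') :
  comp_is g f h -> comp_is g f' h' ->
  (lex_le f f' /\ f <> f') -> (lex_le h h' /\ h <> h').
Proof.
move=> hgf h'gf' /lex_ltP lt_ff'; apply/lex_ltP; rewrite hgf h'gf' !key_comp.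
have g_mono : {in [pred v | v <= size c'] &, {homo (fun v => val (sval g (inord v))) : x y / x < y}}.
  move=> x y xc yc xy; case: (svalP g) => mono _ _ _; apply: mono.
  by rewrite !inordK // ltnS.
by rewrite !ltNge (lexi_map_mono_in g_mono) -?ltNge //; apply: key_bounded.
Qed.

Lemma admissible_lex c : admissible_order mul c (@lex_le c).
Proof.
split=> [c' _ | c' c'' g f f' h h' _ _]; first exact: lex_well_order.
exact: lex_le_postcomp.
Qed.

End OIepNS.

Theorem proposition5p12 (S : Type) (mul : S -> S -> S)
    (mulA : associative mul) (hfin : finite_decompositions mul) :
  groebner_OIep_NS mul.
Proof.
move=> c _; split; first by exists (@lex_le S mul c); apply: admissible_lex.
exact: noetherian_OIep.
Qed.
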